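(* Let $p>3$ be a prime and let $$F(p-1,p-1)=\frac{18p-15}{4^{4p-4}}\binom{6p-6}{3p-3}\binom{3p-3}{p-1}.$$ Then $F(p-1,p-1)\equiv 15p^2\big(-1-6p+8pq_p(2)\big)\pmod{p^4}$.
   Context: $q_p(2)=(2^{p-1}-1)/p$ is the Fermat quotient. (This is the value at $n=k=p-1$ of $F(n,k)=(-1)^{n+k}\frac{20n-2k+3}{4^{5n-k}}\frac{\binom{2n}{n}\binom{4n+2k}{2n+k}\binom{2n-k}{n}\binom{2n+k}{2k}}{\binom{2k}{k}}$.) Congruences between rationals modulo $p^m$ mean the difference is $p^m$ times a rational with denominator prime to $p$. *)

From mathcomp Require Import all_boot all_order all_algebra.
Set Implicit Arguments. Unset Strict Implicit. Unset Printing Implicit Defensive.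
Import Order.TTheory GRing.Theory Num.Theory.
Local Open Scope ring_scope.

Definition fermat_quot2 (p : nat) : rat := ((2 ^+ p.-1 - 1) / p%:R)%R.

Definition rat_cong (p m : nat) (x y : rat) : Prop :=
  exists r : rat, x - y = (p ^ m)%:R * r /\ ~~ (p %| `|denq r|)%N.

Definition Fpp (p : nat) : rat :=
  ((18 * p - 15)%:R / 4 ^+ (4 * p - 4)) * ('C(6 * p - 6, 3 * p - 3))%:R
    * ('C(3 * p - 3, p - 1))%:R.

From mathcomp Require Import all_boot all_order all_algebra.
From mathcomp Require Import cyclic ring lra zify.
Set Implicit Arguments. Unset Strict Implicit. Unset Printing Implicit Defensive.
Import Order.TTheory GRing.Theory Num.Theory.
Local Open Scope ring_scope.

(* Write P = p, q = q_p(2), Q = 2^(p-1) = 1 + Pq, E(P) = (3P-1)(3P-2)(2P-1) and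
   D(P) = (6P-1)(6P-2)(6P-3)(6P-4).  Comparing factorials gives
   C(6p-6,3p-3) C(3p-3,p-1) (6P-5) D(P) = Y P^2 E(P) with Y = C(6p,3p) C(3p,p),
   and Babbage's theorem gives Y = C(6,3) C(3,1) = 60 mod p^2.  As
   18P-15 = 3(6P-5) and 4^(4p-4) = Q^8,
     D(P) Q^8 (F(p-1,p-1) - 15P^2(-1-6P+8Pq)) = 3P^2 (Y E(P) - 5(-1-6P+8Pq) D(P) Q^8),
   and the bracket vanishes mod P^2 once Y, E(P), D(P), Q^8 are replaced by
   their first-order approximations 60, -2+13P, 24-300P, 1+8Pq.  For p > 3 the
   prime p divides neither D(P) nor Q; cancelling 6P-5 (a multiple of p^2 when
   p = 5) is what makes the argument uniform in p. *)

Section CongruenceModulo.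
Variable R : comNzRingType.
Implicit Types m n a b c d x : R.

Definition eqmodr m a b := exists c, a = b + m * c.

Lemma eqmodr_refl m a : eqmodr m a a.
Proof. by exists 0; rewrite mulr0 addr0. Qed.

Lemma eqmodr_trans m a b c : eqmodr m a b -> eqmodr m b c -> eqmodr m a c.
Proof. by move=> [u ->] [v ->]; exists (v + u); ring. Qed.

Lemma eqmodrB m a b c d : eqmodr m a b -> eqmodr m c d -> eqmodr m (a - c) (b - d).
Proof. by move=> [u ->] [v ->]; exists (u - v); ring. Qed.

Lemma eqmodrM m a b c d : eqmodr m a b -> eqmodr m c d -> eqmodr m (a * c) (b * d).
Proof. by move=> [u ->] [v ->]; exists (u * d + b * v + m * u * v); ring. Qed.

Lemma eqmodr_mulr m n a b : eqmodr (m * n) a b -> eqmodr m a b.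
Proof. by move=> [u ->]; exists (n * u); ring. Qed.

Lemma expr1D_eqmodr x k : eqmodr (x ^+ 2) ((1 + x) ^+ k) (1 + x *+ k).
Proof.
elim: k => [|k IHk]; first by rewrite expr0 mulr0n addr0; apply: eqmodr_refl.
rewrite [(1 + x) ^+ _]exprSr; apply: (eqmodr_trans (eqmodrM IHk (eqmodr_refl _ (1 + x)))).
by exists k%:R; rewrite mulrS; ring.
Qed.

End CongruenceModulo.

Definition E3 {R : comNzRingType} (P : R) : R := (3 * P - 1) * (3 * P - 2) * (2 * P - 1).
Definition D4 {R : comNzRingType} (P : R) : R := (6 * P - 1) * (6 * P - 2) * (6 * P - 3) * (6 * P - 4).

Lemma E3_D4_eqmodr (P q k : int) :
  eqmodr (P ^+ 2)
    ((60 + P ^+ 2 * k) * E3 P - 5 * (-1 - 6 * P + 8 * P * q) * D4 P * (1 + P * q) ^+ 8) 0.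
Proof.
have hY : eqmodr (P ^+ 2) (60 + P ^+ 2 * k) 60 by exists k.
have hE : eqmodr (P ^+ 2) (E3 P) (-2 + 13 * P).
  by exists (9 * (2 * P - 3)); rewrite /E3; ring.
have hD : eqmodr (P ^+ 2) (D4 P) (24 - 300 * P).
  by exists (36 * (35 - 60 * P + 36 * P ^+ 2)); rewrite /D4; ring.
have hQ : eqmodr (P ^+ 2) ((1 + P * q) ^+ 8) (1 + 8 * P * q).
  apply: (@eqmodr_mulr _ _ (q ^+ 2)); rewrite -exprMn.
  by apply: (eqmodr_trans (expr1D_eqmodr _ 8)); exists 0; ring.
apply: (eqmodr_trans (eqmodrB (eqmodrM hY hE) (eqmodrM (eqmodrM (eqmodr_refl _ _) hD) hQ))).
by exists (120 * (4 * q * (4 * q - 3) * (50 * P - 4) - 75)); ring.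
Qed.

Lemma rmorph_eqmodr (R S : comNzRingType) (f : {rmorphism R -> S}) (m a b : R) :
  eqmodr m a b -> exists c, f a = f b + f m * f c.
Proof. by move=> [c ->]; exists c; rewrite rmorphD rmorphM. Qed.

Lemma prime_dvd_bin_mul p m j : prime p -> ~~ (p %| j)%N -> (p %| 'C(m * p, j))%N.
Proof.
move=> p_pr; case: j => [|j]; first by rewrite dvdn0.
move=> pNj; have : (p %| j.+1 * 'C(m * p, j.+1))%N.
  by rewrite -mul_bin_diag dvdn_mulr // dvdn_mull.
by rewrite Gauss_dvdr // prime_coprime.
Qed.

Lemma Babbage p a b : prime p -> 'C(a * p, b * p) = 'C(a, b) %[mod p ^ 2].
Proof.
move=> p_pr; have p_gt0 := prime_gt0 p_pr.
elim: a b => [|a IHa] b.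
  by rewrite mul0n !bin0n muln_eq0 (negPf (lt0n_neq0 p_gt0)) orbF.
case: b => [|b]; first by rewrite mul0n !bin0.
rewrite binS -modnDm -(IHa b.+1) -(IHa b) modnDm mulSn -binomial.Vandermonde.
rewrite -(big_mkord xpredT (fun j => 'C(p, j) * 'C(a * p, b.+1 * p - j))%N).
have le_p_bp : (p <= b.+1 * p)%N by rewrite mulSn leq_addr.
rewrite (big_cat_nat _ (n := 1)) //=.
rewrite big_nat1 bin0 mul1n subn0.
rewrite (big_cat_nat _ (n := p)) //=; last exact: leqW.
rewrite (big_cat_nat _ (m := p) (n := p.+1)) //=.
rewrite big_nat1 binn mul1n.
rewrite [X in (_ + (_ + (_ + X)))%N]big1_seq; last first.
  by move=> i /andP [_]; rewrite mem_index_iota => /andP [lt_pi _]; rewrite bin_small.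
have -> : (b.+1 * p - p = b * p)%N by rewrite mulSn addKn.
(* Every middle term is divisible by p twice: once in 'C(p, i), once in the other factor. *)
have /dvdnP [t ->] : (p ^ 2 %| \sum_(1 <= i < p) 'C(p, i) * 'C(a * p, b.+1 * p - i))%N.
  rewrite big_nat; apply: dvdn_sum => i /andP [i_gt0 lt_ip].
  rewrite expnS expn1 dvdn_mul ?prime_dvd_bin ?i_gt0 //.
  apply: prime_dvd_bin_mul => //.
  rewrite mulSnr -addnBA ?(ltnW lt_ip) // dvdn_addr ?dvdn_mull //.
  by rewrite gtnNdvd //; lia.
by rewrite addn0 addnCA modnMDl.
Qed.

Lemma bin_prod_mod p : prime p ->
  ('C(6 * p, 3 * p) * 'C(3 * p, p) = 60 %[mod p ^ 2])%N.
Proof.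
move=> p_pr; have := Babbage 3 1 p_pr; rewrite mul1n => C31.
by rewrite -modnMm Babbage // C31 modnMm.
Qed.

Lemma eqn_mod_natr (R : comNzRingType) (a b d : nat) : (a = b %[mod d])%N ->
  exists k : int, (a%:R : R) = b%:R + d%:R * k%:~R.
Proof.
move=> eq_ab; exists ((a %/ d)%:Z - (b %/ d)%:Z).
rewrite [in a%:R](divn_eq a d) [in b%:R](divn_eq b d) eq_ab.
by rewrite rmorphB /= -!pmulrn !natrD !natrM; ring.
Qed.

Lemma fermat_quot2_nat p : prime p -> (2 < p)%N ->
  exists q : nat, (2 ^ p.-1 = q * p + 1)%N /\ fermat_quot2 p = q%:R.
Proof.
move=> p_pr p_gt2; have p_gt0 := prime_gt0 p_pr.
have : coprime 2 p by rewrite coprime_sym prime_coprime // gtnNdvd.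
move/Euler_exp_totient; rewrite totient_prime // => fermat.
have [q Q_eq] : exists q, (2 ^ p.-1 = q * p + 1)%N.
  exists (2 ^ p.-1 %/ p)%N.
  by rewrite {1}(divn_eq (2 ^ p.-1) p) fermat modn_small // ltnW.
exists q; split => //.
by rewrite /fermat_quot2 -natrX Q_eq natrD addrK natrM mulfK // pnatr_eq0 -lt0n.
Qed.

Lemma binomial_ratio p : (0 < p)%N ->
  'C(6 * p - 6, 3 * p - 3)%:R * 'C(3 * p - 3, p - 1)%:R * ((6 * p%:R - 5) * D4 (p%:R : rat))
  = ('C(6 * p, 3 * p) * 'C(3 * p, p))%:R * p%:R ^+ 2 * E3 (p%:R : rat).
Proof.
case: p => // n _.
have fact_neq0 k : (k`!%:R : rat) != 0 by rewrite pnatr_eq0 -lt0n fact_gt0.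
have binr k m : (m <= k)%N -> ('C(k, m)%:R : rat) = k`!%:R / (m`!%:R * (k - m)`!%:R).
  by move=> le_mk; rewrite -(bin_fact le_mk) !natrM mulfK // mulf_neq0.
rewrite !natrM !binr; try lia.
have -> : (6 * n.+1 - 6 = 6 * n)%N by lia.
have -> : (3 * n.+1 - 3 = 3 * n)%N by lia.
have -> : (n.+1 - 1 = n)%N by lia.
have -> : (6 * n - 3 * n = 3 * n)%N by lia.
have -> : (3 * n - n = 2 * n)%N by lia.
have -> : (6 * n.+1 - 3 * n.+1 = 3 * n.+1)%N by lia.
have -> : (3 * n.+1 - n.+1 = 2 * n.+1)%N by lia.
have -> : (6 * n.+1 = (6 * n).+1.+1.+1.+1.+1.+1)%N by lia.
have -> : (3 * n.+1 = (3 * n).+1.+1.+1)%N by lia.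
have -> : (2 * n.+1 = (2 * n).+1.+1)%N by lia.
rewrite !factS !natrM /D4 /E3.
have := fact_neq0 (6 * n); have := fact_neq0 (3 * n);
have := fact_neq0 (2 * n); have := fact_neq0 n.
have n_ge0 : (0 : rat) <= n%:R by apply: ler0n.
move=> f1 f2 f3 f4; field; rewrite f1 f2 f3 /=.
by repeat (apply/andP; split); apply: lt0r_neq0; lra.
Qed.

Lemma ndvdn_mulp_sub p m j : (0 < m)%N -> (0 < j < p)%N -> ~~ (p %| m * p - j)%N.
Proof.
move=> m_gt0 /andP [j_gt0 lt_jp].
have le_j_mp : (j <= m * p)%N by rewrite (leq_trans (ltnW lt_jp)) // leq_pmull.
by rewrite dvdn_subr ?dvdn_mull // gtnNdvd.
Qed.

Definition D4n (p : nat) : nat := ((6 * p - 1) * (6 * p - 2) * (6 * p - 3) * (6 * p - 4))%N.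

Lemma natr_D4n (R : comNzRingType) p : (0 < p)%N -> ((D4n p)%:R : R) = D4 p%:R.
Proof. by move=> p_gt0; rewrite /D4n /D4 !natrM !natrB ?natrM //; lia. Qed.

Lemma prime_ndvd_D4n p : prime p -> (4 < p)%N -> ~~ (p %| D4n p)%N.
Proof. by move=> p_pr p_gt4; rewrite /D4n !Euclid_dvdM // !negb_or !ndvdn_mulp_sub //; lia. Qed.

Lemma denq_ndvd p (s : int) (d : nat) : prime p -> ~~ (p %| d)%N ->
  ~~ (p %| `|denq (s%:~R / d%:R)|)%N.
Proof.
move=> p_pr pNd.
have d_neq0 : d%:Z != 0 by apply: contraNneq pNd => [[->]].
have pNd_abs : ~~ (p %| `|d%:Z|)%N by [].
have -> : (d%:R : rat) = (d%:Z)%:~R by rewrite pmulrn.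
move: d_neq0 pNd_abs; case: divqP => [|k x k_neq0] //=.
by rewrite abszM Euclid_dvdM // negb_or => _ /andP [].
Qed.

Lemma Fpp_sub_target_identity (K : fieldType) (P q M1 M2 Y S E D Q : K) :
  D != 0 -> Q != 0 ->
  M1 * M2 * ((6 * P - 5) * D) = Y * P ^+ 2 * E ->
  Y * E - 5 * (-1 - 6 * P + 8 * P * q) * D * Q ^+ 8 = P ^+ 2 * S ->
  (18 * P - 15) / Q ^+ 8 * M1 * M2 - 15 * P ^+ 2 * (-1 - 6 * P + 8 * P * q)
    = P ^+ 4 * (3 * S / (D * Q ^+ 8)).
Proof.
move=> D_neq0 Q_neq0 hM hS.
have DQ_neq0 : D * Q ^+ 8 != 0 by rewrite mulf_neq0 // expf_neq0.
apply: (mulIf DQ_neq0).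
have -> : P ^+ 4 * (3 * S / (D * Q ^+ 8)) * (D * Q ^+ 8) = 3 * P ^+ 2 * (P ^+ 2 * S).
  by field; rewrite Q_neq0 D_neq0.
rewrite -hS.
have -> : (18 * P - 15) = 3 * (6 * P - 5) by ring.
transitivity (3 * (M1 * M2 * ((6 * P - 5) * D))
              - 15 * P ^+ 2 * (-1 - 6 * P + 8 * P * q) * D * Q ^+ 8).
  by field.
by rewrite hM; ring.
Qed.

Theorem lemma3p1 (p : nat) (hp : prime p) (hp3 : (3 < p)%N) :
  rat_cong p 4 (Fpp p)
    (15 * (p%:R) ^+ 2 * (-1 - 6 * p%:R + 8 * p%:R * fermat_quot2 p)).
Proof.
have p_gt0 := prime_gt0 hp.
have p_gt4 : (4 < p)%N by case: p hp hp3 {p_gt0} => [|[|[|[|[|p]]]]].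
have [q [Q_eq ->]] := fermat_quot2_nat hp (ltnW hp3).
have [K Y_eq] := eqn_mod_natr rat (bin_prod_mod hp).
have [c hc] := rmorph_eqmodr (@intmul rat 1) (E3_D4_eqmodr p q K).
set P : rat := p%:R; set Q : rat := (2 ^ p.-1)%:R.
set Y : rat := ('C(6 * p, 3 * p) * 'C(3 * p, p))%:R in Y_eq *.
have hS : Y * E3 P - 5 * (-1 - 6 * P + 8 * P * q%:R) * D4 P * Q ^+ 8 = P ^+ 2 * c%:~R.
  rewrite Y_eq natrX /Q Q_eq natrD natrM mulrC addrC.
  by move: hc; rewrite rmorph0 add0r rmorphXn /= pmulrn => <-; rewrite /E3 /D4 /P; ring.
exists ((3 * c)%:~R / (D4n p * (2 ^ p.-1) ^ 8)%:R); split; last first.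
  apply: denq_ndvd; rewrite // Euclid_dvdM // negb_or prime_ndvd_D4n //=.
  by rewrite Euclid_dvdX // Euclid_dvdX // gtnNdvd // ltnW.
have pow4_eq : (4 : rat) ^+ (4 * p - 4) = Q ^+ 8.
  rewrite /Q natrX -exprM (_ : (4 : rat) = 2 ^+ 2); last by rewrite expr2.
  by rewrite -exprM; congr (_ ^+ _); lia.
rewrite /Fpp pow4_eq (natrX _ p 4) rmorphM rmorph_nat natrM natrX natr_D4n //.
rewrite natrB ?natrM; last lia.
apply: Fpp_sub_target_identity (binomial_ratio p_gt0) hS.
- by rewrite -natr_D4n // pnatr_eq0; apply: contraNneq (prime_ndvd_D4n hp p_gt4) => ->.
- by rewrite pnatr_eq0 expn_eq0.
Qed.
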